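(* Let $(h,i)\in\mathbb D$ and let $\phi=\phi_h^{(i)}$. Then $$\chi_h^{(i)}\circ\phi=\big(\chi_{h+1}^{(2i-1)}+\chi_{h+1}^{(2i)}\big)/\sqrt2,$$ $$\chi_{h+1}^{(2i-1)}\circ\phi=\big(\sqrt2\chi_h^{(i)}+\chi_{h+1}^{(2i-1)}-\chi_{h+1}^{(2i)}\big)/2,$$ $$\chi_{h+1}^{(2i)}\circ\phi=\big(\sqrt2\chi_h^{(i)}-\chi_{h+1}^{(2i-1)}+\chi_{h+1}^{(2i)}\big)/2.$$ Moreover, $\chi_k^{(j)}\circ\phi=\chi_k^{(j+2^{k-h-2})}$ if $(k,j)\in\mathbb S_1$ and $\chi_k^{(j)}\circ\phi=\chi_k^{(j-2^{k-h-2})}$ if $(k,j)\in\mathbb S_2$. All remaining Haar functions $\chi_k^{(j)}$, $(k,j)\in\mathbb D\setminus(\{(h,i),(h+1,2i-1),(h+1,2i)\}\cup\mathbb S_1\cup\mathbb S_2)$, satisfy $\chi_k^{(j)}\circ\phi=\chi_k^{(j)}$.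
   Context: Dyadic intervals: $\Delta_k^{(j)}:=[\frac{j-1}{2^k},\frac{j}{2^k})$ for $k\ge0$. Haar functions: for $k\ge1$, integer $j$, $\chi_k^{(j)}(t)=+2^{(k-1)/2}$ on $\Delta_k^{(2j-1)}$, $-2^{(k-1)/2}$ on $\Delta_k^{(2j)}$, $0$ otherwise, $t\in[0,1)$. Dyadic tree $\mathbb D:=\{(k,j):k\ge1;\ j=1,\dots,2^{k-1}\}$. For $(h,i)\in\mathbb D$, $\phi_h^{(i)}:[0,1)\to[0,1)$ is defined by $\phi_h^{(i)}(t)=t+2^{-(h+1)}$ for $t\in\Delta_{h+1}^{(4i-2)}$, $\phi_h^{(i)}(t)=t-2^{-(h+1)}$ for $t\in\Delta_{h+1}^{(4i-1)}$, and $\phi_h^{(i)}(t)=t$ otherwise (it interchanges these two intervals). Subtrees: $\mathbb S_1:=\{(k,j)\in\mathbb D:\Delta_{k-1}^{(j)}\subseteq\Delta_{h+1}^{(4i-2)}\}$ and $\mathbb S_2:=\{(k,j)\in\mathbb D:\Delta_{k-1}^{(j)}\subseteq\Delta_{h+1}^{(4i-1)}\}$. *)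

From Stdlib Require Import Reals Lra ZArith.
Open Scope R_scope.

Definition dyad (k : nat) (j : Z) (t : R) : Prop :=
  IZR (j - 1) / 2 ^ k <= t /\ t < IZR j / 2 ^ k.

Definition in_dyadb (k : nat) (j : Z) (t : R) : bool :=
  if Rle_dec (IZR (j - 1) / 2 ^ k) t then
    if Rlt_dec t (IZR j / 2 ^ k) then true else false
  else false.

Definition haar (k : nat) (j : Z) (t : R) : R :=
  if in_dyadb k (2 * j - 1) t then sqrt (2 ^ (k - 1))
  else if in_dyadb k (2 * j) t then - sqrt (2 ^ (k - 1))
  else 0.

Definition inD (k : nat) (j : Z) : Prop :=
  (1 <= k)%nat /\ (1 <= j <= 2 ^ (Z.of_nat k - 1))%Z.

Definition phi_map (h : nat) (i : Z) (t : R) : R :=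
  if in_dyadb (S h) (4 * i - 2) t then t + / 2 ^ (S h)
  else if in_dyadb (S h) (4 * i - 1) t then t - / 2 ^ (S h)
  else t.

Definition inS1 (h : nat) (i : Z) (k : nat) (j : Z) : Prop :=
  inD k j /\ forall t, dyad (k - 1) j t -> dyad (S h) (4 * i - 2) t.
Definition inS2 (h : nat) (i : Z) (k : nat) (j : Z) : Prop :=
  inD k j /\ forall t, dyad (k - 1) j t -> dyad (S h) (4 * i - 1) t.

From Stdlib Require Import Reals ZArith Lia Lra.
Open Scope R_scope.

(* Multiplying by 2^N and taking the integer part m turns every dyadic
   interval of level at most N into a block of consecutive integers, every
   Haar function of level at most N into a step function of m, and phi_h^(i)
   into the permutation of m exchanging two adjacent blocks of length
   2^(N-h-1).  Each identity thus becomes a case analysis on integer blocks.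
   The identities hold for every real t, and inD h i is used only for 1 <= h. *)

Definition is_floor (m : Z) (x : R) : Prop := IZR m <= x < IZR m + 1.

Lemma is_floor_exists x : exists m, is_floor m x.
Proof.
  exists (Int_part x); destruct (base_Int_part x); unfold is_floor; lra.
Qed.

Lemma is_floor_le a m x : is_floor m x -> (IZR a <= x <-> (a <= m)%Z).
Proof.
  intros [Hm Hm1]; split; intro H.
  - apply Z.lt_succ_r, lt_IZR; rewrite succ_IZR; lra.
  - apply IZR_le in H; lra.
Qed.

Lemma is_floor_lt b m x : is_floor m x -> (x < IZR b <-> (m < b)%Z).
Proof.
  intros [Hm Hm1]; split; intro H.
  - apply lt_IZR; lra.
  - apply Z.le_succ_l, IZR_le in H; rewrite succ_IZR in H; lra.
Qed.

Lemma pow2_pos n : 0 < 2 ^ n.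
Proof. apply pow_lt; lra. Qed.

Lemma div_le_iff x d y : 0 < d -> (x / d <= y <-> x <= y * d).
Proof.
  intro Hd; assert (Hx : x = x / d * d) by (field; lra); split; intro; nra.
Qed.

Lemma lt_div_iff x d y : 0 < d -> (y < x / d <-> y * d < x).
Proof.
  intro Hd; assert (Hx : x = x / d * d) by (field; lra); split; intro; nra.
Qed.

Lemma div_pow2_le_iff a b n : IZR a / 2 ^ n <= IZR b / 2 ^ n <-> (a <= b)%Z.
Proof.
  pose proof (pow2_pos n).
  rewrite div_le_iff by lra.
  replace (IZR b / 2 ^ n * 2 ^ n) with (IZR b) by (field; lra).
  split; [apply le_IZR | apply IZR_le].
Qed.

Lemma div_pow2_refine c n e :
  IZR c / 2 ^ n = IZR (c * 2 ^ Z.of_nat e) / 2 ^ (n + e).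
Proof.
  rewrite mult_IZR, <- pow_IZR, pow_add.
  pose proof (pow2_pos n); pose proof (pow2_pos e); field; lra.
Qed.

Lemma dyad_floor n e N j t m : (n + e = N)%nat -> is_floor m (t * 2 ^ N) ->
  dyad n j t <-> ((j - 1) * 2 ^ Z.of_nat e <= m < j * 2 ^ Z.of_nat e)%Z.
Proof.
  intros <- Hm; pose proof (pow2_pos (n + e)); unfold dyad.
  rewrite !(div_pow2_refine _ n e), div_le_iff, lt_div_iff by lra.
  rewrite (is_floor_le _ _ _ Hm), (is_floor_lt _ _ _ Hm); lia.
Qed.

Lemma in_dyadb_true n j t : in_dyadb n j t = true <-> dyad n j t.
Proof.
  unfold in_dyadb, dyad.
  destruct (Rle_dec _ _); [destruct (Rlt_dec _ _)|]; intuition (discriminate || lra).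
Qed.

Definition in_block (P j m : Z) : bool := ((j - 1) * P <=? m)%Z && (m <? j * P)%Z.

Lemma in_blockP P j m : Bool.reflect ((j - 1) * P <= m < j * P)%Z (in_block P j m).
Proof.
  apply Bool.iff_reflect; unfold in_block.
  rewrite Bool.andb_true_iff, Z.leb_le, Z.ltb_lt; reflexivity.
Qed.

Lemma in_dyadb_floor n e N j t m : (n + e = N)%nat -> is_floor m (t * 2 ^ N) ->
  in_dyadb n j t = in_block (2 ^ Z.of_nat e) j m.
Proof.
  intros HN Hm; apply Bool.eq_iff_eq_true.
  rewrite in_dyadb_true, <- Bool.reflect_iff by apply in_blockP.
  exact (dyad_floor _ _ _ _ _ _ HN Hm).
Qed.

Definition haar_step (a : R) (P j m : Z) : R :=
  if in_block P (2 * j - 1) m then a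
  else if in_block P (2 * j) m then - a
  else 0.

Definition swap_index (P i m : Z) : Z :=
  if in_block P (4 * i - 2) m then (m + P)%Z
  else if in_block P (4 * i - 1) m then (m - P)%Z
  else m.

Lemma haar_floor k e N j t m : (k + e = N)%nat -> is_floor m (t * 2 ^ N) ->
  haar k j t = haar_step (sqrt (2 ^ (k - 1))) (2 ^ Z.of_nat e) j m.
Proof.
  intros HN Hm; unfold haar, haar_step.
  rewrite !(in_dyadb_floor _ _ _ _ _ _ HN Hm); reflexivity.
Qed.

Lemma phi_map_floor h e N i t m : (S h + e = N)%nat -> is_floor m (t * 2 ^ N) ->
  is_floor (swap_index (2 ^ Z.of_nat e) i m) (phi_map h i t * 2 ^ N).
Proof.
  intros HN Hm; unfold phi_map, swap_index.
  rewrite !(in_dyadb_floor _ _ _ _ _ _ HN Hm).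
  assert (Hscale : / 2 ^ S h * 2 ^ N = IZR (2 ^ Z.of_nat e)).
  { rewrite <- pow_IZR, <- HN, pow_add; pose proof (pow2_pos (S h)); field; lra. }
  unfold is_floor in *.
  destruct (in_block _ (4 * i - 2) m); [|destruct (in_block _ (4 * i - 1) m)];
    rewrite ?plus_IZR, ?minus_IZR; lra.
Qed.

Lemma haar_phi_of_step h i k j j' e f t : (S h + e = k + f)%nat ->
  (forall m, haar_step (sqrt (2 ^ (k - 1))) (2 ^ Z.of_nat f) j
               (swap_index (2 ^ Z.of_nat e) i m)
             = haar_step (sqrt (2 ^ (k - 1))) (2 ^ Z.of_nat f) j' m) ->
  haar k j (phi_map h i t) = haar k j' t.
Proof.
  intros HN Hstep; destruct (is_floor_exists (t * 2 ^ (k + f))) as [m Hm].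
  rewrite (haar_floor _ _ _ _ _ _ eq_refl Hm).
  rewrite (haar_floor _ _ _ _ _ _ eq_refl (phi_map_floor _ _ _ i _ _ HN Hm)).
  apply Hstep.
Qed.

Lemma swap_index_cases P i m :
  ((4 * i - 3) * P <= m < (4 * i - 2) * P /\ swap_index P i m = m + P)%Z \/
  ((4 * i - 2) * P <= m < (4 * i - 1) * P /\ swap_index P i m = m - P)%Z \/
  (~ ((4 * i - 3) * P <= m < (4 * i - 2) * P) /\
   ~ ((4 * i - 2) * P <= m < (4 * i - 1) * P) /\ swap_index P i m = m)%Z.
Proof.
  unfold swap_index.
  destruct (in_blockP P (4 * i - 2) m); [left; split; [lia | reflexivity]|].
  destruct (in_blockP P (4 * i - 1) m); [right; left; split; [lia | reflexivity]|].
  right; right; split; [|split]; [lia | lia | reflexivity].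
Qed.

Ltac block_cases P i m :=
  destruct (swap_index_cases P i m) as [[? ->]|[[? ->]|[? [? ->]]]];
  unfold haar_step;
  repeat (match goal with
          | |- context [in_block ?Q ?j ?n] => destruct (in_blockP Q j n)
          end; try (exfalso; lia)).

Section BlockSwap.

Variables (a s : R) (P i j m : Z).
Hypothesis P_pos : (0 < P)%Z.

Lemma haar_step_swap_parent : s <> 0 ->
  haar_step a (2 * P) i (swap_index P i m)
  = (haar_step (s * a) P (2 * i - 1) m + haar_step (s * a) P (2 * i) m) / s.
Proof. intro; block_cases P i m; field; auto. Qed.

Lemma haar_step_swap_left_child :
  haar_step (s * a) P (2 * i - 1) (swap_index P i m)
  = (s * haar_step a (2 * P) i m + haar_step (s * a) P (2 * i - 1) m
     - haar_step (s * a) P (2 * i) m) / 2.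
Proof. block_cases P i m; field. Qed.

Lemma haar_step_swap_right_child :
  haar_step (s * a) P (2 * i) (swap_index P i m)
  = (s * haar_step a (2 * P) i m - haar_step (s * a) P (2 * i - 1) m
     + haar_step (s * a) P (2 * i) m) / 2.
Proof. block_cases P i m; field. Qed.

Lemma haar_step_swap_shift_up :
  ((4 * i - 3) * P <= j - 1)%Z -> (j <= (4 * i - 2) * P)%Z ->
  haar_step a 1 j (swap_index (2 * P) i m) = haar_step a 1 (j + P) m.
Proof. intros; block_cases (2 * P)%Z i m; reflexivity. Qed.

Lemma haar_step_swap_shift_down :
  ((4 * i - 2) * P <= j - 1)%Z -> (j <= (4 * i - 1) * P)%Z ->
  haar_step a 1 j (swap_index (2 * P) i m) = haar_step a 1 (j - P) m.
Proof. intros; block_cases (2 * P)%Z i m; reflexivity. Qed.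

Lemma haar_step_swap_fixed_fine :
  ~ ((4 * i - 3) * P <= j - 1 /\ j <= (4 * i - 2) * P)%Z ->
  ~ ((4 * i - 2) * P <= j - 1 /\ j <= (4 * i - 1) * P)%Z ->
  haar_step a 1 j (swap_index (2 * P) i m) = haar_step a 1 j m.
Proof. intros; block_cases (2 * P)%Z i m; reflexivity. Qed.

Lemma haar_step_swap_fixed_coarse :
  haar_step a (4 * P) j (swap_index 1 i m) = haar_step a (4 * P) j m.
Proof. block_cases 1%Z i m; reflexivity. Qed.

End BlockSwap.

Lemma haar_step_swap_fixed_pair a i j m : j <> i ->
  haar_step a 2 j (swap_index 1 i m) = haar_step a 2 j m.
Proof. intros; block_cases 1%Z i m; reflexivity. Qed.

Lemma haar_step_swap_fixed_unit a i j m : j <> (2 * i - 1)%Z -> j <> (2 * i)%Z ->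
  haar_step a 1 j (swap_index 1 i m) = haar_step a 1 j m.
Proof. intros; block_cases 1%Z i m; reflexivity. Qed.

Lemma Ico_subset_iff x y u v : x < y ->
  (forall t, x <= t < y -> u <= t < v) <-> u <= x /\ y <= v.
Proof.
  intro Hxy; split.
  - intro Hsub; split.
    + apply (Hsub x); lra.
    + apply Rnot_lt_le; intro Hvy.
      destruct (Hsub (Rmax x v)) as [_ Hv].
      * split; [apply Rmax_l | apply Rmax_lub_lt; lra].
      * pose proof (Rmax_r x v); lra.
  - intros [Hux Hyv] t Ht; lra.
Qed.

Definition dyad_subset (a : nat) (j : Z) (b : nat) (l : Z) : Prop :=
  forall t, dyad a j t -> dyad b l t.

Lemma dyad_subset_iff a j b l :
  dyad_subset a j b l <->
  (b <= a)%nat /\ ((l - 1) * 2 ^ Z.of_nat (a - b) <= j - 1)%Z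
                /\ (j <= l * 2 ^ Z.of_nat (a - b))%Z.
Proof.
  pose proof (pow2_pos a) as Ha; pose proof (pow2_pos b) as Hb.
  assert (Hlen : forall c n, IZR (c - 1) / 2 ^ n = IZR c / 2 ^ n - / 2 ^ n).
  { intros c n; pose proof (pow2_pos n); rewrite minus_IZR; field; lra. }
  unfold dyad_subset, dyad.
  rewrite Ico_subset_iff by (rewrite Hlen; apply Rinv_0_lt_compat in Ha; lra).
  assert (Hend : (b <= a)%nat ->
    IZR (l - 1) / 2 ^ b <= IZR (j - 1) / 2 ^ a /\ IZR j / 2 ^ a <= IZR l / 2 ^ b <->
    ((l - 1) * 2 ^ Z.of_nat (a - b) <= j - 1)%Z /\ (j <= l * 2 ^ Z.of_nat (a - b))%Z).
  { intro Hab; rewrite !(div_pow2_refine _ b (a - b)).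
    replace (b + (a - b))%nat with a by lia; rewrite !div_pow2_le_iff; reflexivity. }
  split.
  - intros Hsub; assert (Hab : (b <= a)%nat).
    { destruct (le_lt_dec b a) as [|Hab]; [assumption|]; rewrite !Hlen in Hsub.
      assert (Hpow : 2 ^ a < 2 ^ b) by (apply Rlt_pow; [lra | lia]).
      assert (/ 2 ^ b < / 2 ^ a) by (apply Rinv_lt_contravar; nra).
      lra. }
    split; [exact Hab | apply Hend; assumption].
  - intros [Hab Hint]; apply Hend; assumption.
Qed.

Lemma sqrt_pow2_succ n : sqrt (2 ^ S n) = sqrt 2 * sqrt (2 ^ n).
Proof. apply sqrt_mult; [lra | left; apply pow2_pos]. Qed.

Lemma haar_phi_parent_children h i t : (1 <= h)%nat ->
  haar h i (phi_map h i t)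
  = (haar (S h) (2 * i - 1) t + haar (S h) (2 * i) t) / sqrt 2 /\
  haar (S h) (2 * i - 1) (phi_map h i t)
  = (sqrt 2 * haar h i t + haar (S h) (2 * i - 1) t - haar (S h) (2 * i) t) / 2 /\
  haar (S h) (2 * i) (phi_map h i t)
  = (sqrt 2 * haar h i t - haar (S h) (2 * i - 1) t + haar (S h) (2 * i) t) / 2.
Proof.
  intro Hh; destruct (is_floor_exists (t * 2 ^ S h)) as [m Hm].
  pose proof (phi_map_floor h 0 (S h) i t m (Nat.add_0_r _) Hm) as Hphi.
  assert (Hparent : forall x n, is_floor n (x * 2 ^ S h) ->
            haar h i x = haar_step (sqrt (2 ^ (h - 1))) (2 * 1) i n).
  { intros x n Hn; apply (haar_floor h 1 (S h)); [lia | exact Hn]. }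
  assert (Hchild : forall j x n, is_floor n (x * 2 ^ S h) ->
            haar (S h) j x = haar_step (sqrt 2 * sqrt (2 ^ (h - 1))) 1 j n).
  { intros j x n Hn; rewrite (haar_floor (S h) 0 (S h) j x n (Nat.add_0_r _) Hn).
    replace (S h - 1)%nat with (S (h - 1)) by lia; rewrite sqrt_pow2_succ; reflexivity. }
  rewrite (Hparent _ _ Hm), (Hparent _ _ Hphi), !(Hchild _ _ _ Hm), !(Hchild _ _ _ Hphi).
  assert (Hsqrt2 : sqrt 2 <> 0) by (apply Rgt_not_eq, sqrt_lt_R0; lra).
  split; [|split].
  - apply haar_step_swap_parent; [lia | exact Hsqrt2].
  - apply haar_step_swap_left_child; lia.
  - apply haar_step_swap_right_child; lia.
Qed.

Lemma haar_phi_shift_up h i k j t : dyad_subset (k - 1) j (S h) (4 * i - 2) ->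
  haar k j (phi_map h i t) = haar k (j + 2 ^ (Z.of_nat k - Z.of_nat h - 2))%Z t.
Proof.
  intro Hsub; apply dyad_subset_iff in Hsub as [Hk Hint].
  replace (Z.of_nat k - Z.of_nat h - 2)%Z with (Z.of_nat (k - 1 - S h)) by lia.
  apply (haar_phi_of_step h i k j _ (S (k - 1 - S h)) 0); [lia|]; intro m.
  rewrite Nat2Z.inj_succ, Z.pow_succ_r by lia.
  apply haar_step_swap_shift_up; [apply Z.pow_pos_nonneg | |]; lia.
Qed.

Lemma haar_phi_shift_down h i k j t : dyad_subset (k - 1) j (S h) (4 * i - 1) ->
  haar k j (phi_map h i t) = haar k (j - 2 ^ (Z.of_nat k - Z.of_nat h - 2))%Z t.
Proof.
  intro Hsub; apply dyad_subset_iff in Hsub as [Hk Hint].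
  replace (Z.of_nat k - Z.of_nat h - 2)%Z with (Z.of_nat (k - 1 - S h)) by lia.
  apply (haar_phi_of_step h i k j _ (S (k - 1 - S h)) 0); [lia|]; intro m.
  rewrite Nat2Z.inj_succ, Z.pow_succ_r by lia.
  apply haar_step_swap_shift_down; [apply Z.pow_pos_nonneg | |]; lia.
Qed.

Lemma haar_phi_fixed_fine h i k j t : (S h < k)%nat ->
  ~ dyad_subset (k - 1) j (S h) (4 * i - 2) ->
  ~ dyad_subset (k - 1) j (S h) (4 * i - 1) ->
  haar k j (phi_map h i t) = haar k j t.
Proof.
  intros Hk Hout2 Hout1.
  apply (haar_phi_of_step h i k j j (S (k - 1 - S h)) 0); [lia|]; intro m.
  rewrite Nat2Z.inj_succ, Z.pow_succ_r by lia.
  apply haar_step_swap_fixed_fine; [apply Z.pow_pos_nonneg; lia | |];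
    intro Hint; [apply Hout2 | apply Hout1]; apply dyad_subset_iff;
    (split; [lia | split; lia]).
Qed.

Lemma haar_phi_fixed_coarse h i k j t : (k <= S h)%nat ->
  ~ (k = h /\ j = i) -> ~ (k = S h /\ j = (2 * i - 1)%Z) ->
  ~ (k = S h /\ j = (2 * i)%Z) ->
  haar k j (phi_map h i t) = haar k j t.
Proof.
  intros Hk Hpar Hleft Hright.
  apply (haar_phi_of_step h i k j j 0 (S h - k)); [lia|]; intro m.
  destruct (S h - k)%nat as [|[|g]] eqn:Hf.
  - apply haar_step_swap_fixed_unit; intro Hj;
      [apply Hleft | apply Hright]; split; auto; lia.
  - apply haar_step_swap_fixed_pair; intro Hj; apply Hpar; split; auto; lia.
  - replace (2 ^ Z.of_nat (S (S g)))%Z with (4 * 2 ^ Z.of_nat g)%Z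
      by (rewrite !Nat2Z.inj_succ, !Z.pow_succ_r by lia; lia).
    apply haar_step_swap_fixed_coarse, Z.pow_pos_nonneg; lia.
Qed.

Theorem lemma3p3 (h : nat) (i : Z) :
  inD h i ->
  (forall t, 0 <= t < 1 ->
     haar h i (phi_map h i t)
     = (haar (S h) (2 * i - 1) t + haar (S h) (2 * i) t) / sqrt 2) /\
  (forall t, 0 <= t < 1 ->
     haar (S h) (2 * i - 1) (phi_map h i t)
     = (sqrt 2 * haar h i t + haar (S h) (2 * i - 1) t - haar (S h) (2 * i) t) / 2) /\
  (forall t, 0 <= t < 1 ->
     haar (S h) (2 * i) (phi_map h i t)
     = (sqrt 2 * haar h i t - haar (S h) (2 * i - 1) t + haar (S h) (2 * i) t) / 2) /\
  (forall k j, inS1 h i k j -> forall t, 0 <= t < 1 ->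
     haar k j (phi_map h i t)
     = haar k (j + 2 ^ (Z.of_nat k - Z.of_nat h - 2))%Z t) /\
  (forall k j, inS2 h i k j -> forall t, 0 <= t < 1 ->
     haar k j (phi_map h i t)
     = haar k (j - 2 ^ (Z.of_nat k - Z.of_nat h - 2))%Z t) /\
  (forall k j, inD k j ->
     ~ (k = h /\ j = i) ->
     ~ (k = S h /\ j = (2 * i - 1)%Z) ->
     ~ (k = S h /\ j = (2 * i)%Z) ->
     ~ inS1 h i k j -> ~ inS2 h i k j ->
     forall t, 0 <= t < 1 -> haar k j (phi_map h i t) = haar k j t).
Proof.
  intros [Hh _].
  split; [|split; [|split; [|split; [|split]]]].
  - intros t _; apply (haar_phi_parent_children h i t Hh).
  - intros t _; apply (haar_phi_parent_children h i t Hh).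
  - intros t _; apply (haar_phi_parent_children h i t Hh).
  - intros k j [_ Hsub] t _; exact (haar_phi_shift_up h i k j t Hsub).
  - intros k j [_ Hsub] t _; exact (haar_phi_shift_down h i k j t Hsub).
  - intros k j Hkj Hpar Hleft Hright Hout2 Hout1 t _.
    destruct (le_lt_dec k (S h)) as [Hk | Hk].
    + exact (haar_phi_fixed_coarse h i k j t Hk Hpar Hleft Hright).
    + apply haar_phi_fixed_fine; [exact Hk | |]; intro Hsub;
        [apply Hout2 | apply Hout1]; exact (conj Hkj Hsub).
Qed.
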